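(* For every integer $n\ge 1$, the unitary group $\mathfrak U(n)$ of $n\times n$ complex unitary matrices, as a compact group with its normalized Haar measure, has a dense subgroup that is not Haar measurable. *)

From HB Require Import structures.
From mathcomp Require Import all_boot all_order all_algebra.
From mathcomp Require Import all_classical all_reals.
From mathcomp Require Import ereal topology normedtype sequences measure.
From mathcomp Require Import complex.

Set Implicit Arguments.
Unset Strict Implicit.
Unset Printing Implicit Defensive.

Import Order.TTheory GRing.Theory Num.Theory.
Local Open Scope classical_set_scope.
Local Open Scope ring_scope.

Section UnitaryHaar.
Variables (R : realType) (n : nat).

Local Notation M := 'M[R[i]]_n.

Definition adjmx (A : M) : M := (map_mx (@Num.conj _) A)^T.

Definition unitary_set : set M := [set A | A *m adjmx A = 1%:M].

Definition is_subgroup_U (H : set M) : Prop :=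
  [/\ H `<=` unitary_set, H 1%:M,
      (forall A B, H A -> H B -> H (A *m B)) &
      (forall A, H A -> H (invmx A))].

(* Entrywise closeness: the (usual Euclidean) topology of M ~ C^(n*n). *)
Definition mx_close (e : R) (A B : M) : Prop :=
  forall i j, `|A i j - B i j| < (e%:C)%C.

Definition open_in_U (S : set M) : Prop :=
  S `<=` unitary_set /\
  forall A, S A -> exists2 e : R, 0 < e &
    forall B, unitary_set B -> mx_close e A B -> S B.

Definition dense_in_U (H : set M) : Prop :=
  forall A, unitary_set A -> forall e : R, 0 < e ->
    exists2 B, H B & mx_close e A B.

Definition borel_U : set (set M) := <<s unitary_set, open_in_U >>.

Definition haar_measure_U (mu : set M -> \bar R) : Prop :=
  [/\ mu set0 = 0%E,
      (forall E, borel_U E -> (0 <= mu E)%E),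
      (forall F : nat -> set M, (forall k, borel_U (F k)) ->
         trivIset setT F ->
         (fun m => \sum_(k < m) mu (F k))%E @ \oo --> mu (\bigcup_k F k)),
      mu unitary_set = 1%E &
      (forall g E, unitary_set g -> borel_U E ->
         mu [set g *m x | x in E] = mu E)].

(* S is measurable for (the completion of) the Haar measure mu *)
Definition haar_measurable (mu : set M -> \bar R) (S : set M) : Prop :=
  exists B1 B2, [/\ borel_U B1, borel_U B2, B1 `<=` S, S `<=` B2 &
                    mu (B2 `\` B1) = 0%E].

End UnitaryHaar.

From HB Require Import structures.
From mathcomp Require Import all_boot all_order all_algebra.
From mathcomp Require Import all_classical all_reals.
From mathcomp Require Import ereal topology normedtype sequences measure.
From mathcomp Require Import complex trigo pi_irrational.
From mathcomp Require Import ring lra.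

(** Choose, by Zorn's lemma, a Q-linear subspace V of R that contains pi but not 1
    and satisfies V + Q = R, and let H be the set of unitary matrices whose
    determinant is e^{iv} with v in V.  H is a subgroup, and it is dense because
    V contains Q pi, whose image under t |-> e^{it} is dense in the unit circle.
    The matrices g_q = diag(e^{iq}, 1, ..., 1), q in Q, represent the cosets of H:
    every unitary matrix lies in some g_q H because V + Q = R, and g_q H, g_r H
    are disjoint for q <> r because q - r in V + 2 pi Z, a subset of V, forces
    q = r.  So H behaves like a Vitali set: if B1 <= H <= B2 with Borel B1, B2
    and mu (B2 \ B1) = 0, the disjoint translates g_k B1 (k in N) force mu B1 = 0
    while the countably many translates of B2 covering U(n) force mu B2 > 0. *)

Set Implicit Arguments.
Unset Strict Implicit.
Unset Printing Implicit Defensive.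

Import Order.TTheory GRing.Theory Num.Theory.
Import numFieldNormedType.Exports.
Local Open Scope classical_set_scope.
Local Open Scope ring_scope.

Section RatSubspace.
Variable R : numFieldType.
Implicit Types (A : set R) (x c : R).

Definition rat_closed A :=
  (forall x y, A x -> A y -> A (x + y)) /\ (forall (q : rat) x, A x -> A (ratr q * x)).

Definition rat_extend A x := [set y | exists2 a, A a & exists q : rat, y = a + ratr q * x].

Lemma rat_closed0 A x : rat_closed A -> A x -> A 0.
Proof. by case=> _ Asc /(Asc 0); rewrite rmorph0 mul0r. Qed.

Lemma rat_closedN A x : rat_closed A -> A x -> A (- x).
Proof. by case=> _ Asc /(Asc (-1)); rewrite rmorphN rmorph1 mulN1r. Qed.

Lemma rat_closed_extend A x : rat_closed A -> rat_closed (rat_extend A x).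
Proof.
case=> Aadd Asc; split.
- move=> _ _ [a Aa [q ->]] [b Ab [r ->]]; exists (a + b); first exact: Aadd.
  by exists (q + r); rewrite rmorphD mulrDl addrACA.
- move=> s _ [a Aa [q ->]]; exists (ratr s * a); first exact: Asc.
  by exists (s * q); rewrite mulrDr rmorphM mulrA.
Qed.

Lemma sub_rat_extend A x : A `<=` rat_extend A x.
Proof. by move=> a Aa; exists a => //; exists 0; rewrite rmorph0 mul0r addr0. Qed.

Lemma rat_extend_id A x : A 0 -> rat_extend A x x.
Proof. by move=> A0; exists 0 => //; exists 1; rewrite rmorph1 mul1r add0r. Qed.

Lemma rat_closed_chain (F : set (set R)) : (forall X, F X -> rat_closed X) ->
  total_on F subset -> rat_closed (\bigcup_(X in F) X).
Proof.
move=> Fcl Ftot; split.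
- move=> x y [X FX Xx] [Y FY Yy].
  have [XY|YX] := Ftot X Y FX FY.
  + by exists Y => //; have [Yadd _] := Fcl Y FY; apply: Yadd => //; exact: XY.
  + by exists X => //; have [Xadd _] := Fcl X FX; apply: Xadd => //; exact: YX.
- by move=> q x [X FX Xx]; exists X => //; have [_ Xsc] := Fcl X FX; exact: Xsc.
Qed.

(* Solving [1 = a + q x] for [x]; [q != 0] because [1] is not in [A]. *)
Lemma rat_extend1 A x : rat_closed A -> ~ A 1 -> rat_extend A x 1 ->
  exists2 a, A a & exists q : rat, x = a + ratr q.
Proof.
move=> [_ Asc] nA1 [a Aa [q e1]].
have q0 : q != 0.
  by apply: contra_notN nA1 => /eqP q0; rewrite e1 q0 rmorph0 mul0r addr0.
have rq0 : ratr q != 0 :> R by rewrite fmorph_eq0.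
exists (ratr (- q^-1) * a); first exact: Asc.
exists q^-1; rewrite rmorphN !fmorphV.
have -> : x = (1 - a) / ratr q by rewrite e1 addrAC subrr add0r mulrAC divff // mul1r.
by rewrite mulrBl mul1r mulNr addrC [a * _]mulrC.
Qed.

Lemma exists_rat_hyperplane c : (forall q : rat, ratr q * c != 1) ->
  exists V : set R,
    [/\ rat_closed V, V c, ~ V 1 & forall x, exists2 a, V a & exists q : rat, x = a + ratr q].
Proof.
move=> c_irr.
(* The clause [A x -> A c] makes the empty set admissible, so chains may be empty. *)
pose P A := [/\ rat_closed A, ~ A 1 & forall x, A x -> A c].
have chainP F : F `<=` P -> total_on F subset -> P (\bigcup_(X in F) X).
  move=> FP Ftot; split.
  - by apply: rat_closed_chain Ftot => X /FP[].
  - by move=> [X FX X1]; have [_ + _] := FP X FX; apply.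
  - by move=> x [X FX Xx]; exists X => //; have [_ _ Xc] := FP X FX; exact: Xc Xx.
have [A [[Acl A1 Ac] Amax]] := Zorn_bigcup chainP.
have [x0 Ax0] : exists x, A x.
  apply: contrapT => Ae; apply: (Amax (rat_extend [set 0] c)).
    split; first by move=> x Ax; exfalso; apply: Ae; exists x.
    by move=> sub; apply: Ae; exists c; apply: sub; exact: rat_extend_id.
  split; first by apply: rat_closed_extend; split=> [_ _ -> ->|q _ ->]; rewrite ?addr0 ?mulr0.
  - by move=> [_ -> [q]]; rewrite add0r => /esym/eqP; apply/negP.
  - by move=> _ _; exact: rat_extend_id.
have A0 := rat_closed0 Acl Ax0.
exists A; split => //; first exact: Ac Ax0.
move=> x; have [Ax|nAx] := pselect (A x).
  by exists x => //; exists 0; rewrite rmorph0 addr0.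
apply: rat_extend1 => //; apply: contrapT => nA'1.
apply: (Amax (rat_extend A x)).
  split; first exact: sub_rat_extend.
  by move=> A'A; apply: nAx; apply: A'A; exact: rat_extend_id.
split=> //; first exact: rat_closed_extend.
by move=> _ _; apply: sub_rat_extend; exact: Ac Ax0.
Qed.

End RatSubspace.

Lemma ratr_mul_pi_neq1 (R : realType) (q : rat) : ratr q * (pi : R) != 1.
Proof.
apply/eqP => h; apply: (@pi_irrationnal R).
have q0 : q != 0 by apply: contra_eq_neq h => ->; rewrite rmorph0 mul0r eq_sym oner_neq0.
exists q^-1 => //.
have rq0 : ratr q != 0 :> R by rewrite fmorph_eq0.
by rewrite fmorphV; apply: (mulfI rq0); rewrite mulfV.
Qed.

Local Open Scope complex_scope.

Section UnitCircle.
Variable R : realType.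
Implicit Types s t : R.

Definition expi t : R[i] := (cos t +i* sin t)%C.

Lemma expi0 : expi 0 = 1.
Proof. by rewrite /expi cos0 sin0. Qed.

Lemma expiD s t : expi (s + t) = expi s * expi t.
Proof.
rewrite /expi sinD cosD /= [RHS]/GRing.mul /=.
by congr (_ +i* _); rewrite addrC.
Qed.

Lemma expiNr t : expi t * expi (- t) = 1.
Proof. by rewrite -expiD subrr expi0. Qed.

Lemma conj_expi t : Num.conj (expi t) = expi (- t).
Proof. by rewrite /expi cosN sinN. Qed.

Lemma norm_expi t : `|expi t| = 1.
Proof. by rewrite normc_def /= cos2Dsin2 sqrtr1. Qed.

Lemma expi_neq0 t : expi t != 0.
Proof. by rewrite -normr_eq0 norm_expi oner_eq0. Qed.

Lemma expi_conjK t : expi t * Num.conj (expi t) = 1.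
Proof. by rewrite conj_expi expiNr. Qed.

Lemma unit_circle_expi (z : R[i]) : z * Num.conj z = 1 -> exists t, z = expi t.
Proof.
case: z => a b; rewrite [LHS]/GRing.mul /= => -[h _].
have h2 : a ^+ 2 + b ^+ 2 = 1 by rewrite -h mulrN opprK !expr2.
have ha : -1 <= a <= 1 by apply/andP; split; nra.
have sin_acosE : sin (acos a) = `|b|.
  by rewrite sin_acos // -h2 addrAC subrr add0r sqrtr_sqr.
have [b0|b0] := leP 0 b.
  by exists (acos a); rewrite /expi acosK ?inE // sin_acosE ger0_norm.
by exists (- acos a); rewrite /expi cosN sinN acosK ?inE // sin_acosE ltr0_norm ?opprK.
Qed.

Lemma expi_2pi_int (k : int) : expi (k%:~R * (pi *+ 2)) = 1.
Proof.
have expi_nat m : expi ((pi *+ 2) *+ m) = 1.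
  elim: m => [|m IH]; first by rewrite mulr0n expi0.
  by rewrite mulrS expiD IH /expi cos2pi sin2pi mulr1.
case: k => m; first by rewrite mulr_natl expi_nat.
by rewrite NegzE mulNr mulr_natl -[LHS]mul1r -(expi_nat m.+1) expiNr.
Qed.

Lemma cos_eq1_itv s : 0 <= s < pi *+ 2 -> cos s = 1 -> s = 0.
Proof.
move=> /andP[s0 s2] cs.
have pi0 := pi_ge0 R.
have [sp|ps] := leP s pi.
  by apply: cos_inj; rewrite ?in_itv /= ?s0 ?sp ?lexx // cs cos0.
suff : pi *+ 2 - s = 0 by move/eqP; rewrite subr_eq0 => /eqP s2E; move: s2; rewrite s2E ltxx.
apply: cos_inj; rewrite ?in_itv /= ?lexx //.
- by apply/andP; move: s2 ps; rewrite mulr2n; lra.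
- by rewrite cos0 -cs -cosN opprB cosB cos2pi sin2pi mulr1 mulr0 addr0.
Qed.

Lemma expi_eq1 t : expi t = 1 -> exists k : int, t = k%:~R * (pi *+ 2).
Proof.
move=> ht.
have p2 : 0 < pi *+ 2 :> R by rewrite pmulrn_rgt0 // pi_gt0.
pose k := Num.floor (t / (pi *+ 2)); exists k.
have kl : k%:~R <= t / (pi *+ 2) by exact: floor_le.
have ku : t / (pi *+ 2) < k%:~R + 1 by rewrite -intrD1; exact: floorD1_gt.
apply/eqP; rewrite -subr_eq0; apply/eqP/cos_eq1_itv.
  have tE : t = t / (pi *+ 2) * (pi *+ 2) by rewrite divfK // lt0r_neq0.
  rewrite [t in _ <= t - _]tE [t in t - _ < _]tE.
  by move: kl ku p2; set u := t / _; set P := pi *+ 2; set kk := (k%:~R : R); nra.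
suff : expi (t - k%:~R * (pi *+ 2)) = 1 by case.
by rewrite expiD ht mul1r -mulNr -rmorphN expi_2pi_int.
Qed.

(* [|expi s - expi t|^2 = 2 (1 - cos (s - t))] and [cos] is continuous at [0]. *)
Lemma expi_cont t (e : R) : 0 < e ->
  exists2 d, 0 < d & forall s, `|s - t| < d -> `|expi s - expi t| < e%:C.
Proof.
move=> e0.
have e20 : 0 < e ^+ 2 / 2 by rewrite divr_gt0 // exprn_gt0.
have [d /= d0 hd] := cvgr_dist_lt _ _ (@continuous_cos R 0) _ e20.
exists d => // s hs.
have := hd (s - t); rewrite /ball_ /= sub0r normrN cos0 => /(_ hs) h1.
rewrite normc_def ltcR -[e in _ < e]gtr0_norm // -sqrtr_sqr ltr_sqrt ?exprn_gt0 //=.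
rewrite cosB in h1.
have := cos2Dsin2 s; have := cos2Dsin2 t.
have := ler_norm (1 - (cos s * cos t + sin s * sin t)).
move: h1 e20; rewrite !expr2.
set a := cos s; set b := cos t; set c := sin s; set f := sin t; set ee := e * e.
lra.
Qed.

End UnitCircle.

Section Unitary.
Variables (R : realType) (n : nat).
Local Notation M := 'M[R[i]]_n.
Local Notation U := (@unitary_set R n).
Implicit Types A B g : M.

Lemma adjmxE A i j : adjmx A i j = Num.conj (A j i).
Proof. by rewrite /adjmx !mxE. Qed.

Lemma adjmxM A B : adjmx (A *m B) = adjmx B *m adjmx A.
Proof. by rewrite /adjmx (map_mxM Num.Def.conjC) trmx_mul. Qed.

Lemma adjmxK : involutive (@adjmx R n).
Proof.
move=> A; rewrite /adjmx map_trmx trmxK -map_mx_comp; apply: map_mx_id => x /=.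
exact: conjCK.
Qed.

Lemma adjmx1 : adjmx (1%:M : M) = 1%:M.
Proof. by rewrite /adjmx (map_mx1 Num.Def.conjC) trmx1. Qed.

Lemma det_adjmx A : \det (adjmx A) = Num.conj (\det A).
Proof. by rewrite /adjmx det_tr (det_map_mx Num.Def.conjC). Qed.

Lemma unitaryC A : U A -> adjmx A *m A = 1%:M.
Proof. exact: mulmx1C. Qed.

Lemma unitary1 : U 1%:M.
Proof. by rewrite /unitary_set /= adjmx1 mulmx1. Qed.

Lemma unitaryM A B : U A -> U B -> U (A *m B).
Proof.
move=> hA hB; rewrite /unitary_set /= adjmxM mulmxA -[A *m B *m _]mulmxA.
by rewrite hB mulmx1 hA.
Qed.

Lemma unitary_adjmx A : U A -> U (adjmx A).
Proof. by move=> hA; rewrite /unitary_set /= adjmxK; exact: unitaryC. Qed.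

Lemma invmx_unitary A : U A -> invmx A = adjmx A.
Proof.
move=> hA; have [Au _] := mulmx1_unit hA.
by rewrite -[RHS](mulKmx Au) hA mulmx1.
Qed.

Lemma unitaryV A : U A -> U (invmx A).
Proof. by move=> hA; rewrite invmx_unitary //; exact: unitary_adjmx. Qed.

Lemma unitary_det A : U A -> \det A * Num.conj (\det A) = 1.
Proof. by move=> hA; rewrite -det_adjmx -det_mulmx hA det1. Qed.

Lemma unitary_mulKmx g A : U g -> adjmx g *m (g *m A) = A.
Proof. by move=> hg; rewrite mulmxA unitaryC // mul1mx. Qed.

Lemma unitary_mulmxK g A : U g -> g *m (adjmx g *m A) = A.
Proof. by move=> hg; rewrite mulmxA hg mul1mx. Qed.

Lemma unitary_entry_le1 A i j : U A -> `|A i j| <= 1.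
Proof.
move=> hA.
have rowE : \sum_k `|A i k| ^+ 2 = 1.
  have := congr1 (fun B : M => B i i) hA; rewrite !mxE eqxx /= => h.
  by apply: etrans h; apply: eq_bigr => k _; rewrite adjmxE normCK.
rewrite -(expr_le1 (n:=2)) // -rowE (bigD1 j) //= lerDl.
by apply: sumr_ge0 => k _; exact: exprn_ge0.
Qed.

Definition diag_at (i0 : 'I_n) (c : R[i]) : M :=
  diag_mx (\row_j (if j == i0 then c else 1)).

Lemma mulmx_diag_atE A i0 c i j :
  (A *m diag_at i0 c) i j = A i j * (if j == i0 then c else 1).
Proof. by rewrite /diag_at mul_mx_diag !mxE. Qed.

Lemma det_diag_at i0 c : \det (diag_at i0 c) = c.
Proof.
rewrite /diag_at det_diag (bigD1 i0) //= mxE eqxx big1 ?mulr1 // => j /negPf hj.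
by rewrite mxE hj.
Qed.

Lemma unitary_diag_at i0 c : c * Num.conj c = 1 -> U (diag_at i0 c).
Proof.
move=> hc; apply/matrixP => i j.
rewrite !mxE (bigD1 i) //= big1 ?addr0; last first.
  by move=> k /negPf hk; rewrite /diag_at !mxE (eq_sym i k) hk mulr0n mul0r.
rewrite /adjmx /diag_at !mxE eqxx mulr1n.
have [->|hij] := eqVneq i j; last by rewrite !mulr0n rmorph0 mulr0.
by rewrite !mulr1n; case: (j == i0) => //; rewrite rmorph1 mulr1.
Qed.

End Unitary.

Section BorelTranslate.
Variables (R : realType) (n : nat).
Local Notation M := 'M[R[i]]_n.
Local Notation U := (@unitary_set R n).
Local Notation B := (@borel_U R n).
Implicit Types (A C g : M) (E S : set M).

Lemma mx_close_mul g A C (e : R) : 0 < e -> U g ->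
  mx_close (e / (n%:R + 1)) A C -> mx_close e (g *m A) (g *m C).
Proof.
move=> e0 hg hAC i j.
have N0 : 0 < n%:R + 1 :> R by rewrite ltr_wpDl.
set y := e / (n%:R + 1).
have yn : y *+ n < e.
  have y0 : 0 < y by rewrite divr_gt0.
  have h : y * (n%:R + 1) = e by rewrite /y divfK // lt0r_neq0.
  by rewrite -mulr_natr; move: h y0; set N := (n%:R : R); nra.
have -> : (g *m A) i j - (g *m C) i j = (g *m (A - C)) i j by rewrite mulmxBr !mxE.
rewrite mxE.
apply: (le_lt_trans (ler_norm_sum _ _ _)).
apply: (@le_lt_trans _ _ (\sum_(k < n) y%:C)); last first.
  by rewrite sumr_const card_ord -rmorphMn ltcR.
apply: ler_sum => k _; rewrite normrM.
apply: (le_trans (ler_piMl _ (unitary_entry_le1 _ _ hg))) => //.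
by rewrite !mxE; apply: ltW; exact: hAC.
Qed.

Lemma open_in_U_translate g S : U g -> open_in_U S -> open_in_U [set g *m x | x in S].
Proof.
move=> hg [SU So]; split.
  by move=> _ [x Sx <-]; apply: unitaryM => //; exact: SU.
move=> _ [x Sx <-].
have [e e0 he] := So x Sx.
exists (e / (n%:R + 1)); first by rewrite divr_gt0 // ltr_wpDl.
move=> C hC hxC; exists (adjmx g *m C); last exact: unitary_mulmxK.
apply: he; first by apply: unitaryM => //; exact: unitary_adjmx.
by rewrite -(unitary_mulKmx x hg); apply: mx_close_mul => //; exact: unitary_adjmx.
Qed.

Lemma borel_U_sub E : B E -> E `<=` U.
Proof.
have subU : sigma_algebra U [set A : set M | A `<=` U].
  split => //; first by move=> A _; exact: subDsetl.
  by move=> F hF x [k _ Fx]; exact: hF Fx.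
by apply: smallest_sub subU _ E => S [].
Qed.

Lemma borel_U_full : B U.
Proof. by rewrite -(setD0 U); apply: sigma_algebraCD; exact: sigma_algebra0. Qed.

Lemma borel_USetU E S : B E -> B S -> B (E `|` S).
Proof.
move=> hE hS; rewrite -bigcup2E; apply: sigma_algebra_bigcup => -[|[|k]] //=.
exact: sigma_algebra0.
Qed.

Lemma borel_USetD E S : B E -> B S -> B (E `\` S).
Proof.
move=> hE hS; have EU := borel_U_sub hE.
have -> : E `\` S = U `\` ((U `\` E) `|` S).
  by rewrite setDUr setDD (setIidr EU) setDE setIA (setIidl EU) -setDE.
by apply: sigma_algebraCD; apply: borel_USetU => //; exact: sigma_algebraCD.
Qed.

Lemma borel_U_bigsetU (F : nat -> set M) m :
  (forall k, B (F k)) -> B (\big[setU/set0]_(k < m) F k).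
Proof.
move=> hF; elim: m => [|m IH]; first by rewrite big_ord0; exact: sigma_algebra0.
by rewrite big_ord_recr; exact: borel_USetU.
Qed.

Lemma image_mulmx_setD g E : U g ->
  [set g *m x | x in U `\` E] = U `\` [set g *m x | x in E].
Proof.
move=> hg; apply/seteqP; split.
  move=> _ [x [Ux nEx] <-]; split; first exact: unitaryM.
  by move=> [a Ea /(congr1 (mulmx (adjmx g)))]; rewrite !unitary_mulKmx // => ax; apply: nEx; rewrite -ax.
move=> y [Uy nEy]; exists (adjmx g *m y); last exact: unitary_mulmxK.
split; first by apply: unitaryM => //; exact: unitary_adjmx.
by move=> Ex; apply: nEy; exists (adjmx g *m y) => //; exact: unitary_mulmxK.
Qed.

(* The sets [E] in [U] with [g E] Borel form a sigma-algebra containing the open sets. *)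
Lemma borel_U_translate g E : U g -> B E -> B [set g *m x | x in E].
Proof.
move=> hg hE.
pose P := [set E : set M | E `<=` U /\ B [set g *m x | x in E]].
have sigmaP : sigma_algebra U P.
  split.
  - by split => //; rewrite image_set0; exact: sigma_algebra0.
  - move=> A [AU hA]; split; first exact: subDsetl.
    by rewrite image_mulmx_setD //; exact: sigma_algebraCD.
  - move=> F hF; split; first by move=> x [k _ Fx]; have [+ _] := hF k; apply.
    by rewrite image_bigcup; apply: sigma_algebra_bigcup => k; have [_ ?] := hF k.
have openP : @open_in_U R n `<=` P.
  move=> S hS; split; first by case: hS.
  by apply: sub_sigma_algebra; exact: open_in_U_translate.
by have [] := smallest_sub sigmaP openP hE.
Qed.

End BorelTranslate.

Section Haar.
Variables (R : realType) (n : nat) (mu : set 'M[R[i]]_n -> \bar R).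
Hypothesis hmu : haar_measure_U mu.
Local Notation M := 'M[R[i]]_n.
Local Notation U := (@unitary_set R n).
Local Notation B := (@borel_U R n).
Implicit Types (E S : set M) (F : nat -> set M).

Lemma haar_ge0 E : B E -> (0 <= mu E)%E.
Proof. by case: hmu => _ + _ _ _; apply. Qed.

Lemma haar_translate g E : U g -> B E -> mu [set g *m x | x in E] = mu E.
Proof. by case: hmu => _ _ _ _; apply. Qed.

Lemma haar_sum_le F m : (forall k, B (F k)) -> trivIset setT F ->
  (\sum_(k < m) mu (F k) <= mu (\bigcup_k F k))%E.
Proof.
move=> hF tF; case: hmu => _ _ /(_ F hF tF) cvgF _ _.
apply: (cvge_to_ge cvgF); exists m => // k /= hk.
rewrite -(subnKC hk) big_split_ord /= leeDl //.
by apply: sume_ge0 => i _; exact: haar_ge0.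
Qed.

Lemma haar_bigcup_le F (b : \bar R) : (forall k, B (F k)) -> trivIset setT F ->
  (forall m, (\sum_(k < m) mu (F k) <= b)%E) -> (mu (\bigcup_k F k) <= b)%E.
Proof.
move=> hF tF hb; case: hmu => _ _ /(_ F hF tF) cvgF _ _.
by apply: (cvge_to_le cvgF); exists 0%N.
Qed.

Lemma haar_setU E S : B E -> B S -> E `&` S = set0 -> mu (E `|` S) = (mu E + mu S)%E.
Proof.
move=> hE hS ES.
have hF k : B (bigcup2 E S k).
  by case: k => [|[|k]] //=; exact: sigma_algebra0.
have tF : trivIset setT (bigcup2 E S) by rewrite -trivIset_bigcup2.
have sumE m : (2 <= m)%N -> (\sum_(k < m) mu (bigcup2 E S k) = mu E + mu S)%E.
  move=> hm; rewrite -(subnKC hm) big_split_ord /=.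
  rewrite [X in (_ + X)%E]big1; last by case: hmu.
  by rewrite adde0 !big_ord_recr /= big_ord0 add0e.
rewrite -bigcup2E; apply/eqP; rewrite eq_le -{2}(sumE 2%N) // haar_sum_le // andbT.
apply: haar_bigcup_le => // m.
apply: (@le_trans _ _ (\sum_(k < m.+2) mu (bigcup2 E S k))%E); last by rewrite sumE.
rewrite -addn2 big_split_ord leeDl //.
by apply: sume_ge0 => i _; exact: haar_ge0.
Qed.

Lemma haar_le E S : B E -> B S -> E `<=` S -> (mu E <= mu S)%E.
Proof.
move=> hE hS ES; have hSE := borel_USetD hS hE.
rewrite -(setDUK ES) haar_setU ?leeDl ?haar_ge0 //.
by rewrite setDE setICA setICr setI0.
Qed.

Lemma haar_null_setD E S : B E -> B S -> E `<=` S -> mu (S `\` E) = 0%E ->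
  mu S = mu E.
Proof.
move=> hE hS ES null; have hSE := borel_USetD hS hE.
rewrite -(setDUK ES) haar_setU ?null ?adde0 //.
by rewrite setDE setICA setICr setI0.
Qed.

Lemma haar_bigcup_null F : (forall k, B (F k)) -> (forall k, mu (F k) = 0%E) ->
  mu (\bigcup_k F k) = 0%E.
Proof.
move=> hF null.
have hD k : B (seqDU F k) by apply: borel_USetD => //; exact: borel_U_bigsetU.
apply/eqP; rewrite seqDU_bigcup_eq eq_le haar_ge0 ?andbT; last exact: sigma_algebra_bigcup.
apply: haar_bigcup_le (trivIset_seqDU F) _ => // m.
rewrite big1 // => k _; apply/eqP; rewrite eq_le haar_ge0 // andbT -(null k).
by apply: haar_le => // x [].
Qed.

Lemma ereal_natmul_le1_eq0 (x : \bar R) : (0 <= x)%E ->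
  (forall m, x *+ m <= 1)%E -> x = 0%E.
Proof.
case: x => [s| |] //= s0 hle; last by have := hle 1%N.
have := hle (Num.truncn s^-1).+1; rewrite -EFin_natmul lee_fin -mulr_natr.
have := truncnS_gt s^-1; set N := (_.+1)%:R => hN h.
apply/eqP; rewrite eqe; apply: contraTT h => sn0; rewrite -ltNge.
have sp : 0 < s by rewrite lt_neqAle eq_sym sn0 -lee_fin.
by rewrite -(divff sn0) ltr_pM2l.
Qed.

Lemma haar_disjoint_translates (g : nat -> M) E : (forall k, U (g k)) -> B E ->
  trivIset setT (fun k => [set g k *m x | x in E]) -> mu E = 0%E.
Proof.
move=> hg hE tF.
have hF k : B [set g k *m x | x in E] by exact: borel_U_translate.
have hbig : B (\bigcup_k [set g k *m x | x in E]) by exact: sigma_algebra_bigcup.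
apply: ereal_natmul_le1_eq0 => [|m]; first exact: haar_ge0.
case: hmu => _ _ _ <- _.
apply: le_trans (haar_le hbig (@borel_U_full R n) (borel_U_sub hbig)).
apply: le_trans (haar_sum_le m hF tF).
by under eq_bigr do rewrite haar_translate //; rewrite sumr_const card_ord.
Qed.

Lemma haar_covering_translates (g : nat -> M) E : (forall k, U (g k)) -> B E ->
  U `<=` \bigcup_k [set g k *m x | x in E] -> mu E != 0%E.
Proof.
move=> hg hE cover; apply/eqP => null.
have hF k : B [set g k *m x | x in E] by exact: borel_U_translate.
have := haar_le (@borel_U_full R n) (sigma_algebra_bigcup hF) cover.
rewrite haar_bigcup_null // => [|k]; last by rewrite haar_translate.
by case: hmu => _ _ _ -> _; rewrite lee_fin ler10.
Qed.

End Haar.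

Section DetSubgroup.
Variables (R : realType) (n : nat) (V : set R).
Hypothesis Vcl : rat_closed V.
Local Notation M := 'M[R[i]]_n.
Local Notation U := (@unitary_set R n).

Definition unitary_detV : set M :=
  [set A | U A /\ exists2 v, V v & \det A = expi v].

Lemma unitary_detV_subgroup : V 0 -> is_subgroup_U unitary_detV.
Proof.
case: Vcl => Vadd _ V0; split.
- by move=> A [].
- by split; [exact: unitary1 | exists 0; rewrite ?det1 ?expi0].
- move=> A B [hA [v Vv dA]] [hB [w Vw dB]]; split; first exact: unitaryM.
  by exists (v + w); [exact: Vadd | rewrite det_mulmx dA dB expiD].
- move=> A [hA [v Vv dA]]; split; first exact: unitaryV.
  exists (- v); first exact: rat_closedN.
  by rewrite det_inv dA; apply: (mulIf (expi_neq0 v)); rewrite mulVf ?expi_neq0 // mulrC expiNr.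
Qed.

(* Right multiplication by [diag_at i0 (expi (v - t))] changes [\det A = expi t] into
   [expi v], and moves [A] by at most [|expi t - expi v|] in each entry. *)
Lemma unitary_detV_dense (i0 : 'I_n) : V pi -> dense_in_U unitary_detV.
Proof.
move=> Vpi A hA e e0.
have [t dA] := unit_circle_expi (unitary_det hA).
have [d d0 hd] := expi_cont t e0.
have pi0 : 0 < pi :> R := pi_gt0 R.
have ltp : (t - d) / pi < (t + d) / pi by rewrite ltr_pM2r ?invr_gt0 //; lra.
have [q] := rat_in_itvoo ltp.
rewrite in_itv /= ltr_pdivrMr // ltr_pdivlMr // => /andP [q1 q2].
set v : R := ratr q * pi.
have hv : `|v - t| < d by rewrite /v ltr_norml; apply/andP; split; lra.
pose c := expi v * expi (- t).
exists (A *m diag_at i0 c).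
  split.
    by apply: unitaryM => //; apply: unitary_diag_at; rewrite /c -expiD expi_conjK.
  exists v; first by case: Vcl => _; apply.
  by rewrite det_mulmx det_diag_at dA /c mulrCA expiNr mulr1.
move=> i j; rewrite mulmx_diag_atE.
have [_|_] := eqVneq j i0; last by rewrite mulr1 subrr normr0 ltcR.
have -> : A i j - A i j * c = A i j * ((expi t - expi v) * expi (- t)).
  by rewrite /c mulrBl expiNr mulrBr mulr1.
rewrite normrM normrM norm_expi mulr1.
apply: le_lt_trans (ler_piMl _ (unitary_entry_le1 _ _ hA)) _ => //.
by rewrite distrC; exact: hd.
Qed.

Definition rat_coset_rep (i0 : 'I_n) (q : rat) : M := diag_at i0 (expi (ratr q)).

Lemma unitary_rat_coset_rep i0 q : U (rat_coset_rep i0 q).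
Proof. exact/unitary_diag_at/expi_conjK. Qed.

Lemma rat_coset_rep_cover i0 A :
  (forall x, exists2 a, V a & exists q : rat, x = a + ratr q) ->
  U A -> exists q, exists2 x, unitary_detV x & A = rat_coset_rep i0 q *m x.
Proof.
move=> Vdec hA; have [t dA] := unit_circle_expi (unitary_det hA).
have [a Va [q tE]] := Vdec t.
have hg := unitary_rat_coset_rep i0 q.
exists q, (adjmx (rat_coset_rep i0 q) *m A); last by rewrite unitary_mulmxK.
split; first by apply: unitaryM => //; exact: unitary_adjmx.
exists a => //.
rewrite det_mulmx det_adjmx det_diag_at conj_expi dA tE -expiD.
by rewrite addrC addrK.
Qed.

(* [expi (q + v) = expi (r + w)] forces [q - r] into [w - v + 2 pi Z], a subset of [V]. *)
Lemma rat_coset_rep_disjoint i0 q r x y : V pi -> ~ V 1 ->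
  unitary_detV x -> unitary_detV y ->
  rat_coset_rep i0 q *m x = rat_coset_rep i0 r *m y -> q = r.
Proof.
have [Vadd Vsc] := Vcl; move=> Vpi V1 [_ [v Vv dx]] [_ [w Vw dy]] /(congr1 determinant).
rewrite !det_mulmx !det_diag_at dx dy -!expiD => e.
have [k hk] : exists k : int, (ratr q + v) - (ratr r + w) = k%:~R * (pi *+ 2).
  by apply: expi_eq1; rewrite expiD e -expiD subrr expi0.
have Vqr : V (ratr (q - r)).
  have -> : ratr (q - r) = k%:~R * (pi *+ 2) + w - v :> R.
    by rewrite -hk rmorphB /=; lra.
  apply: (Vadd); last exact: rat_closedN.
  apply: (Vadd) => //.
  have -> : k%:~R * (pi *+ 2) = ratr (k%:~R * 2) * pi :> R.
    by rewrite rmorphM /= ratr_int rmorph_nat mulr2n; ring.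
  exact: Vsc.
apply/eqP; rewrite -subr_eq0; apply: contra_notT V1 => qr0.
by have := Vsc (q - r)^-1 _ Vqr; rewrite -rmorphM mulVf // rmorph1.
Qed.

End DetSubgroup.

Lemma unitary_detV_not_haar_measurable (R : realType) (n : nat) (V : set R)
    (i0 : 'I_n) (mu : set 'M[R[i]]_n -> \bar R) :
  rat_closed V -> V pi -> ~ V 1 ->
  (forall x, exists2 a, V a & exists q : rat, x = a + ratr q) ->
  haar_measure_U mu -> ~ haar_measurable mu (unitary_detV V).
Proof.
move=> Vcl Vpi V1 Vdec hmu [B1 [B2 [hB1 hB2 B1H HB2 null]]].
pose g := rat_coset_rep R i0.
have B1_null : mu B1 = 0%E.
  apply: (haar_disjoint_translates hmu (g := fun k => g k%:R)) => //.
    by move=> k; exact: unitary_rat_coset_rep.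
  move=> i j _ _ [_ [[x Bx <-] [y By e]]].
  have := rat_coset_rep_disjoint Vcl Vpi V1 (B1H _ Bx) (B1H _ By) (esym e).
  by move/eqP; rewrite eqr_nat => /eqP.
have : mu B2 != 0%E.
  apply: (haar_covering_translates hmu (g := fun k => g (odflt 0 (unpickle k)))) => //.
    by move=> k; exact: unitary_rat_coset_rep.
  move=> A hA; have [q [x Hx ->]] := rat_coset_rep_cover i0 Vdec hA.
  by exists (pickle q) => //; rewrite pickleK; exists x => //; exact: HB2.
by rewrite (haar_null_setD hmu hB1 hB2 (subset_trans B1H HB2) null) B1_null eqxx.
Qed.

Theorem mainTheorem2 (R : realType) (n : nat) (hn : (1 <= n)%N) :
  exists H : set 'M[R[i]]_n,
    [/\ is_subgroup_U H, dense_in_U H &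
        forall mu, haar_measure_U mu -> ~ haar_measurable mu H].
Proof.
have [V [Vcl Vpi V1 Vdec]] := exists_rat_hyperplane (@ratr_mul_pi_neq1 R).
pose i0 : 'I_n := Ordinal hn.
exists (unitary_detV V); split.
- exact: unitary_detV_subgroup (rat_closed0 Vcl Vpi).
- exact: unitary_detV_dense i0 Vpi.
- by move=> mu hmu; exact: (unitary_detV_not_haar_measurable i0 Vcl Vpi V1 Vdec hmu).
Qed.
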